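(* Let $\mathcal H$ be a complex Hilbert space, let $\mathbf A=(A_1,\dots,A_m)$ be an $m$-tuple of bounded self-adjoint operators on $\mathcal H$, and let $k$ be a positive integer. If $\operatorname{cl}(\Lambda_{\hat k}(\mathbf A))\neq\emptyset$ for some integer $\hat k\ge(m+2)k$, then $\operatorname{cl}(\Lambda_k(\mathbf A))$ is star-shaped and contains the convex set $\operatorname{conv}\operatorname{cl}(\Lambda_{\hat k}(\mathbf A))$, and every element of $\operatorname{conv}\operatorname{cl}(\Lambda_{\hat k}(\mathbf A))$ is a star center of $\operatorname{cl}(\Lambda_k(\mathbf A))$.
   Context: For an $m$-tuple $\mathbf A=(A_1,\dots,A_m)$ of bounded self-adjoint operators on a complex Hilbert space $\mathcal H$ and a positive integer $k$, the joint rank-$k$ numerical range is $\Lambda_k(\mathbf A)=\{(a_1,\dots,a_m)\in\mathbb R^m:$ there is an orthogonal projection $P$ of rank $k$ on $\mathcal H$ with $PA_jP=a_jP$ for $j=1,\dots,m\}$. $\operatorname{cl}$ denotes closure in $\mathbb R^m$ and $\operatorname{conv}$ convex hull. A set $S\subseteq\mathbb R^m$ is star-shaped with star center $\mathbf c\in S$ if for every $\mathbf b\in S$ the line segment joining $\mathbf c$ and $\mathbf b$ lies in $S$. *)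

From HB Require Import structures.
From mathcomp Require Import all_boot all_order all_algebra.
From mathcomp Require Import all_classical all_reals all_analysis.
From mathcomp Require Import complex.
Import numFieldNormedType.Exports.
Set Implicit Arguments. Unset Strict Implicit. Unset Printing Implicit Defensive.
Import Order.TTheory GRing.Theory Num.Theory ComplexField.
Local Open Scope classical_set_scope.
Local Open Scope ring_scope.

Section Hilbert.
Variable R : realType.
Local Notation C := (R[i]).
Variable H : lmodType C.

Definition is_inner_product (ip : H -> H -> C) : Prop :=
  [/\ (forall (a : C) (x y z : H), ip (a *: x + y) z = a * ip x z + ip y z),
      (forall x y : H, ip y x = (ip x y)^*),
      (forall x : H, 0 <= ip x x) &
      (forall x : H, ip x x = 0 -> x = 0)].

Definition ipnorm (ip : H -> H -> C) (x : H) : R := Num.sqrt (complex.Re (ip x x)).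

Definition ip_complete (ip : H -> H -> C) : Prop :=
  forall u : nat -> H,
    (forall e : R, 0 < e -> exists N : nat, forall p q : nat, (N <= p)%N -> (N <= q)%N ->
        ipnorm ip (u p - u q) < e) ->
    exists l : H, forall e : R, 0 < e -> exists N : nat, forall n : nat, (N <= n)%N ->
        ipnorm ip (u n - l) < e.

Definition is_hilbert (ip : H -> H -> C) : Prop :=
  is_inner_product ip /\ ip_complete ip.

Definition is_linear_op (T : H -> H) : Prop :=
  forall (a : C) (x y : H), T (a *: x + y) = a *: T x + T y.

Definition is_bounded_op (ip : H -> H -> C) (T : H -> H) : Prop :=
  is_linear_op T /\ exists M : R, forall x : H, ipnorm ip (T x) <= M * ipnorm ip x.

Definition is_selfadjoint_op (ip : H -> H -> C) (T : H -> H) : Prop :=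
  is_bounded_op ip T /\ forall x y : H, ip (T x) y = ip x (T y).

Definition is_orth_proj_rank (ip : H -> H -> C) (k : nat) (P : H -> H) : Prop :=
  [/\ is_selfadjoint_op ip P,
      (forall x : H, P (P x) = P x) &
      exists e : 'I_k -> H,
        (forall c : 'I_k -> C, \sum_(i < k) c i *: e i = 0 -> forall i, c i = 0) /\
        (forall y : H, (exists x : H, P x = y) <->
                       (exists c : 'I_k -> C, y = \sum_(i < k) c i *: e i))].

Definition joint_rank_k_nr (ip : H -> H -> C) (m k : nat) (A : 'I_m -> H -> H)
  : set 'rV[R]_m :=
  [set a | exists P : H -> H, is_orth_proj_rank ip k P /\
     forall (j : 'I_m) (x : H), P (A j (P x)) = ((a ord0 j)%:C)%C *: P x].
End Hilbert.

Section Geometry.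
Variables (R : realType) (m : nat).

Definition conv_hull (S : set 'rV[R]_m) : set 'rV[R]_m :=
  [set x | exists (n : nat) (w : 'I_n -> R) (p : 'I_n -> 'rV[R]_m),
     [/\ (forall i, 0 <= w i), \sum_(i < n) w i = 1, (forall i, S (p i)) &
         x = \sum_(i < n) w i *: p i]].

Definition star_center (S : set 'rV[R]_m) (c : 'rV[R]_m) : Prop :=
  S c /\ forall b, S b -> forall t : R, 0 <= t <= 1 -> S ((1 - t) *: c + t *: b).

Definition star_shaped (S : set 'rV[R]_m) : Prop := exists c, star_center S c.
End Geometry.

From HB Require Import structures.
From mathcomp Require Import all_boot all_order all_algebra.
From mathcomp Require Import all_classical all_reals all_analysis.
From mathcomp Require Import complex zify ring.
Import numFieldNormedType.Exports.
Set Implicit Arguments. Unset Strict Implicit. Unset Printing Implicit Defensive.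
Import Order.TTheory GRing.Theory Num.Theory ComplexField.
Local Open Scope classical_set_scope.
Local Open Scope ring_scope.

(* Let b lie in Lambda_k and c in Lambda_K with K >= (m + 2) k, realized by
   orthonormal frames u (of size k) and w (of size K).  The span of w has room
   for an orthonormal k-frame v orthogonal to the (m + 1) k vectors u_l and
   A_j u_l, and v still realizes c.  Then sqrt t u + sqrt (1 - t) v is an
   orthonormal frame realizing t b + (1 - t) c, since all cross terms vanish.
   Iterating this step puts every convex combination of b with points of
   Lambda_K into Lambda_k, and approximation passes to the closures. *)

Lemma sum_mulr_delta (R : pzSemiRingType) n (F : 'I_n -> R) j :
  \sum_i F i * (i == j)%:R = F j.
Proof.
rewrite (bigD1 j) //= eqxx mulr1 big1 ?addr0 // => i /negbTE ->.
by rewrite mulr0.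
Qed.

Definition ord_ext T n (f : 'I_n -> T) (a : T) (i : 'I_n.+1) : T :=
  if unlift ord_max i is Some j then f j else a.

Lemma ord_ext_lift T n (f : 'I_n -> T) a j : ord_ext f a (lift ord_max j) = f j.
Proof. by rewrite /ord_ext liftK. Qed.

Lemma ord_ext_max T n (f : 'I_n -> T) a : ord_ext f a ord_max = a.
Proof. by rewrite /ord_ext unlift_none. Qed.

Lemma big_ord_recr_lift (V : nmodType) n (F : 'I_n.+1 -> V) :
  \sum_i F i = \sum_(i < n) F (lift ord_max i) + F ord_max.
Proof.
rewrite big_ord_recr; congr (_ + _); apply: eq_bigr => i _; congr F.
by apply: val_inj; rewrite /= /bump leqNgt ltn_ord.
Qed.

Lemma widen_ord_inj n p (le_np : (n <= p)%N) : injective (widen_ord le_np).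
Proof. by move=> a b /(congr1 val) /= /val_inj. Qed.

Lemma row_free_rowsub (F : fieldType) m n p (f : 'I_p -> 'I_m) (B : 'M[F]_(m, n)) :
  injective f -> row_free B -> row_free (rowsub f B).
Proof.
move=> f_inj /row_freeP[B' hB']; apply/row_freeP; exists (colsub f B').
rewrite mulmx_colsub mul_rowsub_mx hB'; apply/matrixP => i j.
by rewrite !mxE (inj_eq f_inj).
Qed.

Lemma sqrtC_mul_conj (R : realType) (t : R) : 0 <= t ->
  (Num.sqrt t)%:C%C * ((Num.sqrt t)%:C%C)^*%C = t%:C%C.
Proof. by move=> t0; rewrite conjc_real -rmorphM /= -expr2 sqr_sqrtr. Qed.

Lemma closure_normP (R : realType) m (S : set 'rV[R]_m) x :
  closure S x <-> forall e : R, 0 < e -> exists y, S y /\ `|x - y| < e.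
Proof.
split=> [hx e e0 | h B /nbhs_ballP [e /= e0 hB]].
  have [y [Sy xy]] := hx _ (nbhsx_ballx x e e0).
  by exists y; split => //; move: xy; rewrite -ball_normE.
have [y [Sy xy]] := h e e0; exists y; split => //.
by apply: hB; rewrite -ball_normE.
Qed.

Lemma norm_conv_comb_le (R : realType) (V : normedModType R) n
    (w : 'I_n -> R) (x : 'I_n -> V) (e : R) :
  (forall i, 0 <= w i) -> \sum_i w i = 1 -> (forall i, `|x i| <= e) ->
  `|\sum_i w i *: x i| <= e.
Proof.
move=> w0 w1 xe; apply: (le_trans (ler_norm_sum _ _ _)).
rewrite -[e]mul1r -w1 mulr_suml; apply: ler_sum => i _.
by rewrite normrZ ger0_norm // ler_wpM2l.
Qed.

Section Span.
Variables (R : nzRingType) (V : lmodType R).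

Definition in_span n (e : 'I_n -> V) (y : V) :=
  exists c : 'I_n -> R, y = \sum_i c i *: e i.

Definition lin_indep n (e : 'I_n -> V) :=
  forall c : 'I_n -> R, \sum_i c i *: e i = 0 -> forall i, c i = 0.

Section SpanFamily.
Variables (n : nat) (e : 'I_n -> V).

Lemma in_span0 : in_span e 0.
Proof. by exists (fun=> 0); rewrite big1 // => i _; rewrite scale0r. Qed.

Lemma in_spanDZ a x y : in_span e x -> in_span e y -> in_span e (a *: x + y).
Proof.
move=> [c ->] [d ->]; exists (fun i => a * c i + d i).
rewrite scaler_sumr -big_split /=; apply: eq_bigr => i _.
by rewrite scalerDl scalerA.
Qed.

Lemma in_spanZ a x : in_span e x -> in_span e (a *: x).
Proof. by move=> hx; rewrite -[_ *: _]addr0; apply: in_spanDZ hx in_span0. Qed.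

Lemma in_spanD x y : in_span e x -> in_span e y -> in_span e (x + y).
Proof. by rewrite -{2}[x]scale1r; apply: in_spanDZ. Qed.

Lemma in_span_sum p (F : 'I_p -> V) :
  (forall j, in_span e (F j)) -> in_span e (\sum_j F j).
Proof. by move=> hF; elim/big_ind: _ => //; [exact: in_span0 | exact: in_spanD]. Qed.

Lemma in_span_gen i : in_span e (e i).
Proof.
exists (fun j => (j == i)%:R); rewrite (bigD1 i) //= eqxx scale1r big1 ?addr0 //.
by move=> j /negbTE ->; rewrite scale0r.
Qed.

Lemma in_span_trans p (f : 'I_p -> V) y :
  (forall j, in_span e (f j)) -> in_span f y -> in_span e y.
Proof. by move=> hf [c ->]; apply: in_span_sum => j; apply: in_spanZ. Qed.

End SpanFamily.

Lemma lin_indep_lift n (h : 'I_n.+1 -> V) :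
  lin_indep h -> lin_indep (fun i => h (lift ord_max i)).
Proof.
move=> hh c hc i; move: (hh (ord_ext c 0)); rewrite big_ord_recr_lift.
under eq_bigr do rewrite ord_ext_lift.
by rewrite ord_ext_max scale0r addr0 hc => /(_ erefl (lift ord_max i)); rewrite ord_ext_lift.
Qed.

Lemma lin_indep_max_notin_span n (h : 'I_n.+1 -> V) :
  lin_indep h -> ~ in_span (fun i => h (lift ord_max i)) (h ord_max).
Proof.
move=> hh [c hc]; move: (hh (ord_ext c (-1))); rewrite big_ord_recr_lift.
under eq_bigr do rewrite ord_ext_lift.
rewrite ord_ext_max -hc scaleN1r subrr => /(_ erefl ord_max).
by rewrite ord_ext_max => /eqP; rewrite oppr_eq0 oner_eq0.
Qed.

End Span.

Section LinearOp.
Variables (R : realType) (H : lmodType R[i]).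

Lemma linop0 (T : H -> H) : is_linear_op T -> T 0 = 0.
Proof.
move=> hT; have := hT 1 0 0; rewrite scaler0 addr0 scale1r => h.
by apply: (@addrI _ (T 0)); rewrite addr0 -h.
Qed.

Lemma linopD (T : H -> H) x y : is_linear_op T -> T (x + y) = T x + T y.
Proof. by move=> hT; have := hT 1 x y; rewrite !scale1r. Qed.

Lemma linopZ (T : H -> H) a x : is_linear_op T -> T (a *: x) = a *: T x.
Proof. by move=> hT; have := hT a x 0; rewrite !addr0 (linop0 hT) addr0. Qed.

Lemma linop_sum (T : H -> H) n (c : 'I_n -> R[i]) (e : 'I_n -> H) :
  is_linear_op T -> T (\sum_i c i *: e i) = \sum_i c i *: T (e i).
Proof.
move=> hT; rewrite (big_morph T (fun x y => linopD x y hT) (linop0 hT)).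
by apply: eq_bigr => i _; rewrite linopZ.
Qed.

Lemma selfadjoint_op_linear (ip : H -> H -> R[i]) (T : H -> H) :
  is_selfadjoint_op ip T -> is_linear_op T.
Proof. by case=> -[]. Qed.

End LinearOp.

Section InnerProduct.
Variables (R : realType) (H : lmodType R[i]) (ip : H -> H -> R[i]).
Hypothesis hip : is_inner_product ip.

Lemma ipDZl a x y z : ip (a *: x + y) z = a * ip x z + ip y z.
Proof. by case: hip. Qed.

Lemma ipC x y : ip y x = (ip x y)^*%C.
Proof. by case: hip. Qed.

Lemma ip_self_ge0 x : 0 <= ip x x.
Proof. by case: hip. Qed.

Lemma ip_self_eq0 x : ip x x = 0 -> x = 0.
Proof. by case: hip => _ _ _; apply. Qed.

Lemma ip0l z : ip 0 z = 0.
Proof.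
have := ipDZl 1 0 0 z; rewrite scaler0 addr0 mul1r => h.
by apply: (@addrI _ (ip 0 z)); rewrite addr0 -h.
Qed.

Lemma ipDl x y z : ip (x + y) z = ip x z + ip y z.
Proof. by have := ipDZl 1 x y z; rewrite scale1r mul1r. Qed.

Lemma ipZl a x z : ip (a *: x) z = a * ip x z.
Proof. by rewrite -(addr0 (a *: x)) ipDZl ip0l addr0. Qed.

Lemma ipNl x z : ip (- x) z = - ip x z.
Proof. by rewrite -scaleN1r ipZl mulN1r. Qed.

Lemma ipBl x y z : ip (x - y) z = ip x z - ip y z.
Proof. by rewrite ipDl ipNl. Qed.

Lemma ip_suml I (r : seq I) (P : pred I) (F : I -> H) z :
  ip (\sum_(i <- r | P i) F i) z = \sum_(i <- r | P i) ip (F i) z.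
Proof. exact: (big_morph (ip^~ z) (fun x y => ipDl x y z) (ip0l z)). Qed.

Lemma ip0r z : ip z 0 = 0.
Proof. by rewrite ipC ip0l conjc0. Qed.

Lemma ipDr x y z : ip z (x + y) = ip z x + ip z y.
Proof. by rewrite [ip z (x + y)]ipC ipDl rmorphD [ip z x]ipC [ip z y]ipC. Qed.

Lemma ipZr a x z : ip z (a *: x) = a^*%C * ip z x.
Proof. by rewrite [ip z (a *: x)]ipC ipZl rmorphM [ip z x]ipC. Qed.

Lemma ip_sumr I (r : seq I) (P : pred I) (F : I -> H) z :
  ip z (\sum_(i <- r | P i) F i) = \sum_(i <- r | P i) ip z (F i).
Proof. exact: (big_morph (ip z) (fun x y => ipDr x y z) (ip0r z)). Qed.

Lemma ip_self_real x : ip x x = (ipnorm ip x ^+ 2)%:C%C.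
Proof.
move: (ip_self_ge0 x); rewrite /ipnorm; case: (ip x x) => a b.
by rewrite lecE /= => /andP[/eqP -> a0]; rewrite sqr_sqrtr.
Qed.

Definition orthonormal n (u : 'I_n -> H) :=
  forall i j, ip (u i) (u j) = (i == j)%:R.

Lemma ip_orthonormal_coef n (u : 'I_n -> H) c l : orthonormal u ->
  ip (\sum_i c i *: u i) (u l) = c l.
Proof.
move=> hu; rewrite ip_suml; under eq_bigr => i _ do rewrite ipZl hu.
exact: sum_mulr_delta.
Qed.

Lemma ip_span_eq0 n (e : 'I_n -> H) y x :
  (forall i, ip (e i) y = 0) -> in_span e x -> ip x y = 0.
Proof.
move=> he [c ->]; rewrite ip_suml big1 // => i _.
by rewrite ipZl he mulr0.
Qed.

Lemma orthonormal_indep n (u : 'I_n -> H) : orthonormal u -> lin_indep u.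
Proof. by move=> hu c hc i; rewrite -(ip_orthonormal_coef c i hu) hc ip0l. Qed.

Definition normalize (v : H) : H := ((ipnorm ip v)^-1)%:C%C *: v.

Lemma ip_normalize v : v != 0 -> ip (normalize v) (normalize v) = 1.
Proof.
move=> v0; have n0 : ipnorm ip v != 0.
  apply: contra v0 => /eqP n0; apply/eqP/ip_self_eq0.
  by rewrite ip_self_real n0 expr0n.
rewrite ipZl ipZr conjc_real ip_self_real -!rmorphM /= mulrA -expr2 exprVn.
by rewrite mulVf // expf_neq0.
Qed.

Lemma orthonormal_ext n (u : 'I_n -> H) w : orthonormal u -> ip w w = 1 ->
  (forall l, ip w (u l) = 0) -> orthonormal (ord_ext u w).
Proof.
move=> hu hw wu i j.
case: (unliftP ord_max i) => [i' ->|->]; case: (unliftP ord_max j) => [j' ->|->];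
  rewrite ?ord_ext_lift ?ord_ext_max.
- by rewrite hu (inj_eq (@lift_inj _ ord_max)).
- by rewrite ipC wu conjc0 eq_sym (negbTE (neq_lift _ _)).
- by rewrite wu (negbTE (neq_lift _ _)).
- by rewrite hw eqxx.
Qed.

Lemma gram_schmidt n (h : 'I_n -> H) : lin_indep h ->
  exists u : 'I_n -> H, orthonormal u /\ forall l, in_span h (u l).
Proof.
elim: n h => [|n IH] h hh; first by exists h; split => [[]|[]].
have [u [hu hs]] := IH _ (lin_indep_lift hh).
have hs' l : in_span h (u l).
  by apply: in_span_trans (hs l) => i; apply: in_span_gen.
pose v := h ord_max - \sum_j ip (h ord_max) (u j) *: u j.
have vu l : ip v (u l) = 0 by rewrite ipBl ip_orthonormal_coef // subrr.
have v0 : v != 0.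
  apply/eqP => /eqP; rewrite subr_eq0 => /eqP hv.
  apply: (lin_indep_max_notin_span hh); rewrite hv.
  by apply: in_span_sum => j; apply/in_spanZ/hs.
exists (ord_ext u (normalize v)); split.
  by apply: orthonormal_ext => // [|l]; [exact: ip_normalize | rewrite ipZl vu mulr0].
move=> l; case: (unliftP ord_max l) => [l' ->|->].
  by rewrite ord_ext_lift; apply: hs'.
rewrite ord_ext_max; apply/in_spanZ; rewrite /v addrC -scaleN1r.
apply: in_spanDZ; last exact: in_span_gen.
by apply: in_span_sum => j; apply/in_spanZ.
Qed.

Lemma ip_add_orthogonal (a b : R[i]) (x x' y y' : H) :
  ip x y' = 0 -> ip x' y = 0 ->
  ip (a *: x + b *: x') (a *: y + b *: y') = a * a^*%C * ip x y + b * b^*%C * ip x' y'.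
Proof.
move=> xy' x'y; rewrite !ipDl !ipDr !ipZl !ipZr.
by rewrite xy' x'y !mulr0 addr0 add0r !mulrA.
Qed.

Definition orth_proj k (u : 'I_k -> H) (y : H) : H := \sum_i ip y (u i) *: u i.

Section OrthProj.
Variables (k : nat) (u : 'I_k -> H).
Hypothesis hu : orthonormal u.

Lemma orth_proj_linear : is_linear_op (orth_proj u).
Proof.
move=> a x y; rewrite /orth_proj scaler_sumr -big_split /=.
by apply: eq_bigr => i _; rewrite ipDZl scalerDl scalerA.
Qed.

Lemma orth_proj_in_span y : in_span u (orth_proj u y).
Proof. by exists (fun i => ip y (u i)). Qed.

Lemma orth_proj_id y : in_span u y -> orth_proj u y = y.
Proof.
by move=> [c ->]; apply: eq_bigr => i _; rewrite ip_orthonormal_coef.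
Qed.

Lemma orth_proj_selfadjoint x y : ip (orth_proj u x) y = ip x (orth_proj u y).
Proof.
rewrite ip_suml ip_sumr; apply: eq_bigr => i _.
by rewrite ipZl ipZr -ipC mulrC.
Qed.

Lemma ip_orth_proj_sub x y : in_span u y -> ip (x - orth_proj u x) y = 0.
Proof.
move=> hy; rewrite ipC (ip_span_eq0 _ hy) ?conjc0 // => l.
by rewrite ipC ipBl ip_orthonormal_coef // subrr conjc0.
Qed.

Lemma ipnorm_orth_proj x : ipnorm ip (orth_proj u x) <= ipnorm ip x.
Proof.
set y := orth_proj u x; set z := x - y.
have yz : ip z y = 0 by apply/ip_orth_proj_sub/orth_proj_in_span.
have zy : ip y z = 0 by rewrite ipC yz conjc0.
have xyz : x = y + z by rewrite /z addrC subrK.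
clearbody y z.
have pythagoras : ip x x = ip y y + ip z z.
  by rewrite xyz !ipDl !ipDr yz zy addr0 add0r.
rewrite -(ler_pXn2r (_ : 0 < 2)%N) ?nnegrE ?sqrtr_ge0 //.
rewrite -lecR -!ip_self_real pythagoras lerDl.
exact: ip_self_ge0.
Qed.

Lemma orth_proj_rank : is_orth_proj_rank ip k (orth_proj u).
Proof.
split.
- split; last exact: orth_proj_selfadjoint.
  split; first exact: orth_proj_linear.
  by exists 1 => x; rewrite mul1r ipnorm_orth_proj.
- by move=> y; apply/orth_proj_id/orth_proj_in_span.
- exists u; split=> [|y]; first exact: orthonormal_indep.
  by split=> [[x <-] | hy]; [apply: orth_proj_in_span | exists y; apply: orth_proj_id].
Qed.

End OrthProj.

Lemma orthonormal_combination_indep k K (w : 'I_K -> H) (B : 'M[R[i]]_(k, K)) :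
  orthonormal w -> row_free B -> lin_indep (fun l => \sum_i B l i *: w i).
Proof.
move=> hw hB d hd l; suff /rowP/(_ l) : \row_l d l = 0 by rewrite !mxE.
apply: (row_free_inj hB); rewrite mul0mx; apply/rowP => i.
have := congr1 (ip^~ (w i)) hd; rewrite ip0l ip_suml => hsum.
rewrite !mxE -[RHS]hsum; apply: eq_bigr => l' _.
by rewrite mxE ipZl ip_orthonormal_coef.
Qed.

Lemma orthonormal_orthogonal_frame (T : finType) (g : T -> H) k K (w : 'I_K -> H) :
  orthonormal w -> (#|T| + k <= K)%N ->
  exists u : 'I_k -> H,
    [/\ orthonormal u, forall l, in_span w (u l) & forall l s, ip (u l) (g s) = 0].
Proof.
move=> hw hK.
(* Rows of a basis of the left kernel of M are coordinates (in w) of vectors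
   orthogonal to every g s; that kernel has dimension K - rank M >= k. *)
pose M : 'M[R[i]]_(K, #|T|) := \matrix_(i, s) ip (w i) (g (enum_val s)).
have hr : (k <= \rank (kermx M))%N.
  by rewrite mxrank_ker; have := rank_leq_col M; lia.
pose B := rowsub (widen_ord hr) (row_base (kermx M)).
have B_free : row_free B.
  by apply: row_free_rowsub; [exact: widen_ord_inj | exact: row_base_free].
have BM : B *m M = 0.
  have /sub_kermxP base0 : (row_base (kermx M) <= kermx M)%MS by rewrite eq_row_base.
  by apply/matrixP => l s; rewrite mul_rowsub_mx base0 !mxE.
pose h l := \sum_i B l i *: w i.
have h_orth l s : ip (h l) (g s) = 0.
  have := congr1 (fun X : 'M[R[i]]_(k, #|T|) => X l (enum_rank s)) BM.
  rewrite !mxE => <-.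
  rewrite ip_suml; apply: eq_bigr => i _.
  by rewrite ipZl !mxE enum_rankK.
have [u [hu hs]] := gram_schmidt (orthonormal_combination_indep hw B_free).
exists u; split => // [l | l s].
  by apply: in_span_trans (hs l) => l'; exists (B l').
by apply: (ip_span_eq0 _ (hs l)) => l'; apply: h_orth.
Qed.

Section JointNumericalRange.
Variables (m : nat) (A : 'I_m -> H -> H).

Local Notation Lambda k := (joint_rank_k_nr ip k A).

Lemma joint_nr_of_orthonormal k (u : 'I_k -> H) (a : 'rV[R]_m) :
  (forall j, is_linear_op (A j)) -> orthonormal u ->
  (forall j l i, ip (A j (u l)) (u i) = (a ord0 j)%:C%C * (l == i)%:R) ->
  Lambda k a.
Proof.
move=> hA hu ha; exists (orth_proj u); split; first exact: (orth_proj_rank hu).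
move=> j x; rewrite {1}/orth_proj scaler_sumr; apply: eq_bigr => i _.
rewrite scalerA; congr (_ *: _).
rewrite /orth_proj linop_sum // ip_suml.
under eq_bigr => l _ do rewrite ipZl ha mulrCA.
by rewrite -mulr_sumr sum_mulr_delta mulrC.
Qed.

Lemma joint_nr_compression k (a : 'rV[R]_m) : Lambda k a ->
  exists u : 'I_k -> H, orthonormal u /\
    forall j x y, in_span u x -> in_span u y -> ip (A j x) y = (a ord0 j)%:C%C * ip x y.
Proof.
move=> [P [[[_ P_sa] P_idem [e [e_indep e_range]]] hPA]].
have P_id x : in_span e x -> P x = x by move=> /e_range[z <-]; rewrite P_idem.
have [u [hu hs]] := gram_schmidt e_indep.
exists u; split => // j x y /(in_span_trans hs) hx /(in_span_trans hs) hy.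
by rewrite -{1}(P_id x hx) -{1}(P_id y hy) -P_sa hPA ipZl (P_id x hx).
Qed.

Lemma joint_nr_mono k K (a : 'rV[R]_m) : (forall j, is_linear_op (A j)) ->
  (k <= K)%N -> Lambda K a -> Lambda k a.
Proof.
move=> hA hk /joint_nr_compression[u [hu hua]].
apply: (@joint_nr_of_orthonormal _ (u \o widen_ord hk)) => // [i j | j l i] /=.
  by rewrite hu (inj_eq (@widen_ord_inj _ _ hk)).
by rewrite hua ?hu ?(inj_eq (@widen_ord_inj _ _ hk)) //; apply: in_span_gen.
Qed.

Section StarShape.
Hypothesis hA : forall j, is_selfadjoint_op ip (A j).
Variables (k K : nat).
Hypothesis hK : ((m + 2) * k <= K)%N.

Let A_linear j : is_linear_op (A j) := selfadjoint_op_linear (hA j).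

Lemma joint_nr_convex_step (b c : 'rV[R]_m) (t : R) :
  Lambda k b -> Lambda K c -> 0 <= t <= 1 -> Lambda k ((1 - t) *: c + t *: b).
Proof.
move=> /joint_nr_compression[u [hu hub]] /joint_nr_compression[w [hw hwc]] /andP[t0 t1].
pose g (s : option 'I_m * 'I_k) := if s.1 is Some j then A j (u s.2) else u s.2.
have card_g : (#|{: option 'I_m * 'I_k}| + k <= K)%N.
  by rewrite card_prod card_option !card_ord; lia.
have [v [hv v_in v_orth]] := orthonormal_orthogonal_frame g hw card_g.
have vu l i : ip (v l) (u i) = 0 := v_orth l (None, i).
have uv l i : ip (u i) (v l) = 0 by rewrite ipC vu conjc0.
have Auv l i j : ip (A j (u i)) (v l) = 0.
  by rewrite ipC (v_orth l (Some j, i)) conjc0.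
have Avu l i j : ip (A j (v l)) (u i) = 0.
  by case: (hA j) => _ ->; exact: (v_orth l (Some j, i)).
pose al := (Num.sqrt t)%:C%C; pose be := (Num.sqrt (1 - t))%:C%C.
have al2 : al * al^*%C = t%:C%C by exact: sqrtC_mul_conj.
have be2 : be * be^*%C = (1 - t)%:C%C by apply: sqrtC_mul_conj; rewrite subr_ge0.
apply: (joint_nr_of_orthonormal (u := fun l => al *: u l + be *: v l)) => //.
  move=> l i; rewrite ip_add_orthogonal // al2 be2 hu hv.
  by rewrite -mulrDl -rmorphD /= addrC subrK mul1r.
move=> j l i; rewrite (linopD _ _ (A_linear j)) !(linopZ _ _ (A_linear j)).
rewrite ip_add_orthogonal // al2 be2.
rewrite hub ?hwc ?hu ?hv; try solve [exact: in_span_gen | exact: v_in].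
by rewrite !mxE [X in _ = X * _]rmorphD !rmorphM /=; ring.
Qed.

Lemma joint_nr_cone_step (s r : R) (b c : 'rV[R]_m) :
  Lambda k b -> Lambda K c -> 0 <= s -> 0 <= r ->
  exists2 b', Lambda k b' & s *: b + r *: c = (s + r) *: b'.
Proof.
move=> hb hc s0 r0; have [/eqP|sr0] := eqVneq (s + r) 0.
  rewrite paddr_eq0 // => /andP[/eqP-> /eqP->].
  by exists b; rewrite // addr0 !scale0r addr0.
exists ((1 - s / (s + r)) *: c + (s / (s + r)) *: b).
  apply: joint_nr_convex_step => //.
  by rewrite divr_ge0 ?addr_ge0 //= ler_pdivrMr ?mul1r ?lerDl // lt_def sr0 addr_ge0.
rewrite scalerDr !scalerA addrC; congr (_ *: _ + _ *: _); field => //.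
Qed.

Lemma joint_nr_conv_comb n (s : R) (b : 'rV[R]_m) (w : 'I_n -> R) (p : 'I_n -> 'rV[R]_m) :
  Lambda k b -> (forall i, Lambda K (p i)) -> 0 <= s -> (forall i, 0 <= w i) ->
  s + \sum_i w i = 1 -> Lambda k (s *: b + \sum_i w i *: p i).
Proof.
elim: n s b w p => [|n IH] s b w p hb hp s0 w0.
  by rewrite !big_ord0 !addr0 => ->; rewrite scale1r.
rewrite !big_ord_recl !addrA => hsum.
have [b' hb' ->] := joint_nr_cone_step hb (hp ord0) s0 (w0 ord0).
by apply: IH; rewrite ?addr_ge0.
Qed.

Lemma closure_joint_nr_segment (c b : 'rV[R]_m) (t : R) :
  conv_hull (closure (Lambda K)) c -> closure (Lambda k) b -> 0 <= t <= 1 ->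
  closure (Lambda k) ((1 - t) *: c + t *: b).
Proof.
move=> [n [w [p [w0 w1 hp ->]]]] hb /andP[t0 t1].
apply/closure_normP => e e0; have e2 : 0 < e / 2 by rewrite divr_gt0.
have [b' [hb' bb']] := (closure_normP _ _).1 hb _ e2.
have [p' hp'] := choice (fun i => (closure_normP _ _).1 (hp i) _ e2).
exists (t *: b' + \sum_i ((1 - t) * w i) *: p' i); split.
  apply: (joint_nr_conv_comb hb') => // [i | i |].
  - by case: (hp' i).
  - by rewrite mulr_ge0 ?subr_ge0.
  - by rewrite -mulr_sumr w1 mulr1 addrC subrK.
have -> : (1 - t) *: \sum_i w i *: p i + t *: b - (t *: b' + \sum_i ((1 - t) * w i) *: p' i)
    = (1 - t) *: \sum_i w i *: (p i - p' i) + t *: (b - b').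
  under [in RHS]eq_bigr do rewrite scalerBr.
  under [\sum_i (_ * _) *: _]eq_bigr do rewrite -scalerA.
  by rewrite sumrB -scaler_sumr !scalerBr opprD [- (t *: b') + _]addrC addrACA.
have pp' : `|\sum_i w i *: (p i - p' i)| <= e / 2.
  by apply: norm_conv_comb_le => // i; case: (hp' i) => _ /ltW.
apply: (le_lt_trans (ler_normD _ _)); rewrite !normrZ !ger0_norm ?subr_ge0 //.
apply: (@le_lt_trans _ _ ((1 - t) * (e / 2) + t * (e / 2))).
  by apply: lerD; apply: ler_wpM2l; rewrite ?subr_ge0 ?pp' ?(ltW bb').
by rewrite -mulrDl subrK mul1r ltr_pdivrMr // ltr_pMr // ltr1n.
Qed.

End StarShape.
End JointNumericalRange.
End InnerProduct.

Theorem corollary3p2 (R : realType) (H : lmodType R[i]) (ip : H -> H -> R[i])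
  (m : nat) (A : 'I_m -> H -> H) (k khat : nat) :
  is_hilbert ip ->
  (forall j : 'I_m, is_selfadjoint_op ip (A j)) ->
  (0 < k)%N ->
  ((m + 2) * k <= khat)%N ->
  closure (joint_rank_k_nr ip khat A) !=set0 ->
  [/\ star_shaped (closure (joint_rank_k_nr ip k A)),
      conv_hull (closure (joint_rank_k_nr ip khat A)) `<=` closure (joint_rank_k_nr ip k A) &
      forall c, conv_hull (closure (joint_rank_k_nr ip khat A)) c ->
        star_center (closure (joint_rank_k_nr ip k A)) c].
Proof.
move=> [hip _] hA _ hK [p hp].
have center c : conv_hull (closure (joint_rank_k_nr ip khat A)) c ->
    star_center (closure (joint_rank_k_nr ip k A)) c.
  move=> hc; split=> [|b hb t ht]; last exact: (closure_joint_nr_segment hip hA hK).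
  have hp_k : closure (joint_rank_k_nr ip k A) p.
    apply: closureS hp => a; apply: joint_nr_mono => // [j|]; last lia.
    exact: selfadjoint_op_linear.
  have := closure_joint_nr_segment hip hA hK hc hp_k (t := 0).
  by rewrite subr0 scale1r scale0r addr0; apply; rewrite lexx ler01.
have p_hull : conv_hull (closure (joint_rank_k_nr ip khat A)) p.
  by exists 1%N, (fun=> 1), (fun=> p); split; rewrite ?big_ord1 ?scale1r.
split=> [|c /center[] //|]; last exact: center.
by exists p; apply: center.
Qed.
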